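(* Let $\nabla$ and $\tilde\nabla$ be Type $\mathcal A$ connections on $\mathbb R^2$ whose Ricci tensors $\rho$ and $\tilde\rho$ are non-degenerate. Then $\nabla$ is linearly equivalent to $\tilde\nabla$ if and only if $\nabla$ is (locally) affinely equivalent to $\tilde\nabla$.
   Context: A torsion-free connection has Christoffel symbols $\nabla_{\partial_{x^i}}\partial_{x^j}=\Gamma_{ij}^k\partial_{x^k}$; curvature $R(X,Y)Z=\nabla_X\nabla_YZ-\nabla_Y\nabla_XZ-\nabla_{[X,Y]}Z$, Ricci tensor $\rho(Y,Z)=\mathrm{Tr}(X\mapsto R(X,Y)Z)$. For real constants, $\Gamma(a,b,c,d,e,f)$ denotes the connection on $\mathbb R^2$ with constant Christoffel symbols $\Gamma_{11}^1=a$, $\Gamma_{11}^2=b$, $\Gamma_{12}^1=\Gamma_{21}^1=c$, $\Gamma_{12}^2=\Gamma_{21}^2=d$, $\Gamma_{22}^1=e$, $\Gamma_{22}^2=f$; these are the Type $\mathcal A$ connections. Two Type $\mathcal A$ connections are linearly equivalent if there is $T\in GL(2,\mathbb R)$ with $T^*\tilde\nabla=\nabla$. They are (locally) affinely equivalent if there exist open sets $U,V\subset\mathbb R^2$ and a diffeomorphism $T:U\to V$ with $T^*\tilde\nabla=\nabla$ on $U$. *)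

From Stdlib Require Import Reals.
Open Scope R_scope.

(** Points of R^2. Coordinate indices are naturals; 0 is x^1, any other is x^2.
    All sums below range over the indices {0,1}. *)
Definition pt := (R * R)%type.
Definition sum2 (f : nat -> R) : R := f 0%nat + f 1%nat.

(** Type A connection Gamma(a,b,c,d,e,f): constant Christoffel symbols. *)
Record TypeA := mkTypeA { ga : R; gb : R; gc : R; gd : R; ge : R; gf : R }.

(** Gam G i j k = Gamma_{ij}^k  (nabla_{d_i} d_j = Gamma_{ij}^k d_k). *)
Definition Gam (G : TypeA) (i j k : nat) : R :=
  match i, j, k with
  | O, O, O => ga G
  | O, O, _ => gb G
  | O, S _, O | S _, O, O => gc G
  | O, S _, _ | S _, O, _ => gd G
  | S _, S _, O => ge G
  | S _, S _, _ => gf G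
  end.

(** Curvature: R(d_i,d_j)d_k = Rc G i j k m d_m, computed from
    R(X,Y)Z = nabla_X nabla_Y Z - nabla_Y nabla_X Z - nabla_[X,Y] Z
    with constant Christoffel symbols and [d_i,d_j]=0. *)
Definition Rc (G : TypeA) (i j k m : nat) : R :=
  sum2 (fun l => Gam G j k l * Gam G i l m - Gam G i k l * Gam G j l m).

(** Ricci tensor rho(d_j,d_k) = Tr (X |-> R(X,d_j)d_k). *)
Definition ric (G : TypeA) (j k : nat) : R := sum2 (fun i => Rc G i j k i).

Definition ric_nondegenerate (G : TypeA) : Prop :=
  ric G 0 0 * ric G 1 1 - ric G 0 1 * ric G 1 0 <> 0.

(** Pullback equation T^* Gt = G at a point, in coordinates:
    J k l = d_l T^k, H k j i = d_i (d_j T^k). The equation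
    nablat_{T_* d_i} (T_* d_j) = T_* (nabla_{d_i} d_j), k-th component. *)
Definition pullback_eq (G Gt : TypeA) (J : nat -> nat -> R)
    (H : nat -> nat -> nat -> R) (i j k : nat) : Prop :=
  H k j i + sum2 (fun b => sum2 (fun a => Gam Gt b a k * J b i * J a j))
  = sum2 (fun l => Gam G i j l * J k l).

(** Linear equivalence: T(x) = M x with M invertible, T^* Gt = G
    (second derivatives of a linear map vanish). *)
Definition linearly_equivalent (G Gt : TypeA) : Prop :=
  exists M : nat -> nat -> R,
    M 0%nat 0%nat * M 1%nat 1%nat - M 0%nat 1%nat * M 1%nat 0%nat <> 0 /\
    forall i j k : nat, (i < 2)%nat -> (j < 2)%nat -> (k < 2)%nat ->
      pullback_eq G Gt M (fun _ _ _ => 0) i j k.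

Definition coord (k : nat) (p : pt) : R :=
  match k with O => fst p | _ => snd p end.

Definition shift (i : nat) (p : pt) (t : R) : pt :=
  match i with O => (fst p + t, snd p) | _ => (fst p, snd p + t) end.

Definition open2 (U : pt -> Prop) : Prop :=
  forall p, U p -> exists eps, 0 < eps /\
    forall q, Rabs (fst q - fst p) < eps -> Rabs (snd q - snd p) < eps -> U q.

Definition has_partial (U : pt -> Prop) (i : nat) (f g : pt -> R) : Prop :=
  forall p, U p -> derivable_pt_lim (fun t => f (shift i p t)) 0 (g p).

Definition cont_on (U : pt -> Prop) (f : pt -> R) : Prop :=
  forall p, U p -> forall eps, 0 < eps -> exists del, 0 < del /\
    forall q, Rabs (fst q - fst p) < del -> Rabs (snd q - snd p) < del ->
      Rabs (f q - f p) < eps.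

Fixpoint Ck (n : nat) (U : pt -> Prop) (f : pt -> R) : Prop :=
  match n with
  | O => cont_on U f
  | S n' => cont_on U f /\ exists g0 g1 : pt -> R,
      has_partial U 0 f g0 /\ has_partial U 1 f g1 /\ Ck n' U g0 /\ Ck n' U g1
  end.

Definition smooth_on (U : pt -> Prop) (f : pt -> R) : Prop := forall n, Ck n U f.

Definition smooth_map_on (U : pt -> Prop) (T : pt -> pt) : Prop :=
  smooth_on U (fun p => fst (T p)) /\ smooth_on U (fun p => snd (T p)).

Definition diffeo (U V : pt -> Prop) (T : pt -> pt) : Prop :=
  open2 U /\ open2 V /\ (forall p, U p -> V (T p)) /\ smooth_map_on U T /\
  exists S : pt -> pt, (forall q, V q -> U (S q)) /\
    (forall p, U p -> S (T p) = p) /\ (forall q, V q -> T (S q) = q) /\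
    smooth_map_on V S.

Definition affinely_equivalent (G Gt : TypeA) : Prop :=
  exists (U V : pt -> Prop) (T : pt -> pt),
    (exists p, U p) /\ diffeo U V T /\
    exists (dT : nat -> nat -> pt -> R) (ddT : nat -> nat -> nat -> pt -> R),
      (forall k i, (k < 2)%nat -> (i < 2)%nat ->
         has_partial U i (fun p => coord k (T p)) (dT k i)) /\
      (forall k i j, (k < 2)%nat -> (i < 2)%nat -> (j < 2)%nat ->
         has_partial U j (dT k i) (ddT k i j)) /\
      forall p, U p -> forall i j k : nat,
        (i < 2)%nat -> (j < 2)%nat -> (k < 2)%nat ->
        pullback_eq G Gt (fun k l => dT k l p) (fun k a b => ddT k a b p) i j k.

From Stdlib Require Import Reals Lra Lia.
Open Scope R_scope.

(* A linear equivalence is a global, hence local, affine equivalence.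
   Conversely, let T pull [Gt] back to [G] on an open set U.  Its Jacobian J
   solves the first-order system [d_i J^k_j = defect J i j k], where [defect J]
   vanishes exactly when the matrix J is a linear equivalence.  Equality of the
   mixed partials of J gives the integrability condition [T^* R~ = R]; tracing
   it, [J^T rho~ J = rho] is constant on U.  Differentiating [J^T rho~ J] shows
   that [rho~(defect J i j, J e_k)] is antisymmetric in (j, k), while it is
   symmetric in (i, j); hence it vanishes, and since both [J] and [rho~] are
   non-degenerate, [defect J = 0]: the Jacobian of T at any point of U is a
   linear equivalence. *)

Lemma lt2 n : (n < 2)%nat -> n = 0%nat \/ n = 1%nat.
Proof. lia. Qed.

Lemma derivable_pt_lim_val f x l L :
  derivable_pt_lim f x l -> l = L -> derivable_pt_lim f x L.
Proof. now intros H <-. Qed.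

Ltac derive leaf :=
  first [ apply derivable_pt_lim_const | apply derivable_pt_lim_id
        | apply derivable_pt_lim_plus; [derive leaf | derive leaf]
        | apply derivable_pt_lim_minus; [derive leaf | derive leaf]
        | apply derivable_pt_lim_mult; [derive leaf | derive leaf]
        | leaf ].

Lemma derivable_pt_lim_locally_const f c l d : 0 < d ->
  (forall t, Rabs t < d -> f t = c) -> derivable_pt_lim f 0 l -> l = 0.
Proof.
  intros Hd Hf Df. apply (uniqueness_limite (fun _ => c) 0).
  - apply (derivable_pt_lim_locally_ext f _ 0 (- d) d); [lra| |exact Df].
    intros t Ht. apply Hf. apply Rabs_def1; lra.
  - apply derivable_pt_lim_const.
Qed.

Lemma derivable_pt_lim_cont f x l : derivable_pt_lim f x l ->
  forall e, 0 < e -> exists d, 0 < d /\ forall h, Rabs h < d -> Rabs (f (x + h) - f x) < e.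
Proof.
  intros Df e He.
  destruct (derivable_continuous_pt f x (exist _ l Df) e He) as [d [Hd Hc]].
  exists d; split; [exact Hd|]. intros h Hh.
  destruct (Req_dec h 0) as [->|Hh0].
  - rewrite Rplus_0_r, Rminus_diag, Rabs_R0; exact He.
  - apply (Hc (x + h)). split; [split; [exact I|lra]|].
    simpl; unfold R_dist. replace (x + h - x) with h by ring; exact Hh.
Qed.

Lemma MVT_between (f f' : R -> R) u v :
  (forall c, Rabs (c - u) <= Rabs (v - u) -> derivable_pt_lim f c (f' c)) ->
  exists c, Rabs (c - u) <= Rabs (v - u) /\ f v - f u = f' c * (v - u).
Proof.
  intros Df. destruct (Rtotal_order u v) as [Huv|[<-|Hvu]].
  - destruct (MVT_cor2 f f' u v Huv) as [c [E Hc]].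
    { intros c Hc. apply Df. rewrite !Rabs_right; lra. }
    exists c. split; [rewrite !Rabs_right; lra|exact E].
  - exists u. split; [lra|ring].
  - destruct (MVT_cor2 f f' v u Hvu) as [c [E Hc]].
    { intros c Hc. apply Df. rewrite !Rabs_left1; lra. }
    exists c. split; [rewrite !Rabs_left1; lra|lra].
Qed.

Lemma shift0 i p : shift i p 0 = p.
Proof. destruct p, i; simpl; rewrite Rplus_0_r; reflexivity. Qed.

Lemma open2_rect U p : open2 U -> U p -> exists e, 0 < e /\
  forall a b, Rabs (a - fst p) < e -> Rabs (b - snd p) < e -> U (a, b).
Proof.
  intros HU Hp. destruct (HU p Hp) as [e [He H]].
  exists e; split; [exact He|]. intros a b Ha Hb. now apply H.
Qed.

Lemma open2_shift U p : open2 U -> U p -> exists e, 0 < e /\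
  forall i t, Rabs t < e -> U (shift i p t).
Proof.
  intros HU Hp. destruct (HU p Hp) as [e [He H]]. exists e; split; [exact He|].
  intros [|i] t Ht; apply H; simpl;
    rewrite ?Rminus_diag, ?Rabs_R0; try exact He;
    now replace (_ + t - _) with t by ring.
Qed.

Lemma has_partial_fst U f g a b : has_partial U 0 f g -> U (a, b) ->
  derivable_pt_lim (fun s => f (s, b)) a (g (a, b)).
Proof.
  intros H Hp eps Heps. destruct (H _ Hp eps Heps) as [d Hd].
  exists d. intros h Hh Hhd. specialize (Hd h Hh Hhd). simpl in Hd.
  now rewrite !Rplus_0_r, Rplus_0_l in Hd.
Qed.

Lemma has_partial_snd U f g a b : has_partial U 1 f g -> U (a, b) ->
  derivable_pt_lim (fun s => f (a, s)) b (g (a, b)).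
Proof.
  intros H Hp eps Heps. destruct (H _ Hp eps Heps) as [d Hd].
  exists d. intros h Hh Hhd. specialize (Hd h Hh Hhd). simpl in Hd.
  now rewrite !Rplus_0_r, Rplus_0_l in Hd.
Qed.

Lemma cont_on_const U c : cont_on U (fun _ => c).
Proof.
  intros p _ eps Heps. exists 1. split; [lra|].
  intros. now rewrite Rminus_diag, Rabs_R0.
Qed.

Lemma cont_on_fst U : cont_on U fst.
Proof. intros p _ eps Heps. exists eps. split; [exact Heps|]. auto. Qed.

Lemma cont_on_snd U : cont_on U snd.
Proof. intros p _ eps Heps. exists eps. split; [exact Heps|]. auto. Qed.

Lemma cont_on_binop (op : R -> R -> R) U f g :
  (forall A B eps, 0 < eps -> exists e, 0 < e /\ forall a b,
     Rabs (a - A) < e -> Rabs (b - B) < e -> Rabs (op a b - op A B) < eps) ->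
  cont_on U f -> cont_on U g -> cont_on U (fun x => op (f x) (g x)).
Proof.
  intros Hop Cf Cg p Hp eps Heps.
  destruct (Hop (f p) (g p) eps Heps) as [e [He Hclose]].
  destruct (Cf p Hp e He) as [d1 [Hd1 H1]].
  destruct (Cg p Hp e He) as [d2 [Hd2 H2]].
  exists (Rmin d1 d2). split; [now apply Rmin_pos|].
  intros q Hq1 Hq2.
  pose proof (Rmin_l d1 d2). pose proof (Rmin_r d1 d2).
  apply Hclose; [apply H1|apply H2]; lra.
Qed.

Lemma close_plus A B eps : 0 < eps -> exists e, 0 < e /\
  forall a b, Rabs (a - A) < e -> Rabs (b - B) < e -> Rabs (a + b - (A + B)) < eps.
Proof.
  intros Heps. exists (eps / 2). split; [lra|]. intros a b Ha Hb.
  replace (a + b - (A + B)) with ((a - A) + (b - B)) by ring.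
  eapply Rle_lt_trans; [apply Rabs_triang|lra].
Qed.

Lemma close_minus A B eps : 0 < eps -> exists e, 0 < e /\
  forall a b, Rabs (a - A) < e -> Rabs (b - B) < e -> Rabs (a - b - (A - B)) < eps.
Proof.
  intros Heps. exists (eps / 2). split; [lra|]. intros a b Ha Hb.
  replace (a - b - (A - B)) with ((a - A) + - (b - B)) by ring.
  eapply Rle_lt_trans; [apply Rabs_triang|]. rewrite Rabs_Ropp. lra.
Qed.

Lemma close_mult A B eps : 0 < eps -> exists e, 0 < e /\
  forall a b, Rabs (a - A) < e -> Rabs (b - B) < e -> Rabs (a * b - A * B) < eps.
Proof.
  intros Heps.
  set (K := Rabs A + Rabs B + 1).
  assert (HK : 0 < K) by (unfold K; pose proof (Rabs_pos A); pose proof (Rabs_pos B); lra).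
  exists (Rmin 1 (eps / K)). split.
  { apply Rmin_pos; [lra|apply Rdiv_lt_0_compat; lra]. }
  intros a b Ha Hb.
  assert (e1 : Rmin 1 (eps / K) <= 1) by apply Rmin_l.
  assert (eK : Rmin 1 (eps / K) * K <= eps).
  { apply (Rle_trans _ (eps / K * K)); [|right; field; lra].
    apply Rmult_le_compat_r; [lra|apply Rmin_r]. }
  replace (a * b - A * B) with (a * (b - B) + (a - A) * B) by ring.
  eapply Rle_lt_trans; [apply Rabs_triang|]. rewrite !Rabs_mult.
  assert (Ra : Rabs a <= Rabs A + 1).
  { replace a with (A + (a - A)) by ring. eapply Rle_trans; [apply Rabs_triang|lra]. }
  set (e := Rmin 1 (eps / K)) in *. unfold K in eK.
  assert (T1 : Rabs a * Rabs (b - B) <= (Rabs A + 1) * Rabs (b - B))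
    by (apply Rmult_le_compat_r; [apply Rabs_pos|exact Ra]).
  assert (T2 : (Rabs A + 1) * Rabs (b - B) < (Rabs A + 1) * e)
    by (apply Rmult_lt_compat_l; [pose proof (Rabs_pos A); lra|exact Hb]).
  assert (T3 : Rabs (a - A) * Rabs B <= e * Rabs B)
    by (apply Rmult_le_compat_r; [apply Rabs_pos|lra]).
  lra.
Qed.

Lemma cont_on_plus U f g : cont_on U f -> cont_on U g -> cont_on U (fun x => f x + g x).
Proof. apply (cont_on_binop Rplus), close_plus. Qed.

Lemma cont_on_minus U f g : cont_on U f -> cont_on U g -> cont_on U (fun x => f x - g x).
Proof. apply (cont_on_binop Rminus), close_minus. Qed.

Lemma cont_on_mult U f g : cont_on U f -> cont_on U g -> cont_on U (fun x => f x * g x).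
Proof. apply (cont_on_binop Rmult), close_mult. Qed.

Ltac cont leaf :=
  first [ apply cont_on_const | apply cont_on_fst | apply cont_on_snd
        | apply cont_on_plus; [cont leaf | cont leaf]
        | apply cont_on_minus; [cont leaf | cont leaf]
        | apply cont_on_mult; [cont leaf | cont leaf]
        | leaf ].

Lemma cont_on_ext U f g : open2 U -> (forall x, U x -> f x = g x) -> cont_on U g -> cont_on U f.
Proof.
  intros HU Efg Cg p Hp eps Heps.
  destruct (Cg p Hp eps Heps) as [d [Hd H]]. destruct (HU p Hp) as [e [He HE]].
  exists (Rmin d e). split; [now apply Rmin_pos|].
  intros q Hq1 Hq2. pose proof (Rmin_l d e). pose proof (Rmin_r d e).
  rewrite (Efg q), (Efg p) by (exact Hp || (apply HE; lra)). apply H; lra.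
Qed.

Lemma smooth_on_partial_cont U f g i : open2 U -> smooth_on U f ->
  has_partial U i f g -> (i < 2)%nat -> cont_on U g.
Proof.
  intros HU Hf Hg Hi.
  destruct (Hf 1%nat) as [_ [g0 [g1 [P0 [P1 [C0 C1]]]]]].
  destruct (lt2 i Hi) as [->| ->];
    [apply (cont_on_ext U g g0)|apply (cont_on_ext U g g1)]; auto;
    intros x Hx; eapply uniqueness_limite; [apply Hg|apply P0|apply Hg|apply P1]; auto.
Qed.

Lemma Ck_const U n c : Ck n U (fun _ => c).
Proof.
  revert c; induction n as [|n IH]; intros c; simpl; [apply cont_on_const|].
  split; [apply cont_on_const|]. exists (fun _ => 0), (fun _ => 0).
  repeat split; auto; intros p _; apply derivable_pt_lim_const.
Qed.

Lemma smooth_on_linear U a b : smooth_on U (fun p => a * fst p + b * snd p).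
Proof.
  intros [|n]; simpl; [cont fail|].
  split; [cont fail|]. exists (fun _ => a), (fun _ => b).
  repeat split; try apply Ck_const;
    intros p _; simpl; (eapply derivable_pt_lim_val; [derive fail|cbv beta; ring]).
Qed.

(* Both sides equal the second difference
   [f(x+h,y+h) - f(x+h,y) - f(x,y+h) + f(x,y)] divided by [h^2],
   computed by the mean value theorem in the two possible orders. *)
Lemma mixed_difference_mvt U f f0 f1 f01 f10 x y h : 0 < h ->
  (forall a b, x <= a <= x + h -> y <= b <= y + h -> U (a, b)) ->
  has_partial U 0 f f0 -> has_partial U 1 f f1 ->
  has_partial U 1 f0 f01 -> has_partial U 0 f1 f10 ->
  exists c d c' d', x < c < x + h /\ y < d < y + h /\
    x < c' < x + h /\ y < d' < y + h /\ f01 (c, d) = f10 (c', d').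
Proof.
  intros Hh HR H0 H1 H01 H10.
  destruct (MVT_cor2 (fun s => f (s, y + h) - f (s, y))
              (fun s => f0 (s, y + h) - f0 (s, y)) x (x + h)) as [c [Ec Hc]]; [lra| |].
  { intros c Hc. apply derivable_pt_lim_minus;
      (apply (has_partial_fst U); [assumption|apply HR; lra]). }
  destruct (MVT_cor2 (fun s => f0 (c, s)) (fun s => f01 (c, s)) y (y + h))
    as [d [Ed Hd]]; [lra| |].
  { intros d Hd. apply (has_partial_snd U); [assumption|apply HR; lra]. }
  destruct (MVT_cor2 (fun s => f (x + h, s) - f (x, s))
              (fun s => f1 (x + h, s) - f1 (x, s)) y (y + h)) as [d' [Ed' Hd']]; [lra| |].
  { intros d' Hd'. apply derivable_pt_lim_minus;
      (apply (has_partial_snd U); [assumption|apply HR; lra]). }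
  destruct (MVT_cor2 (fun s => f1 (s, d')) (fun s => f10 (s, d')) x (x + h))
    as [c' [Ec' Hc']]; [lra| |].
  { intros c' Hc'. apply (has_partial_fst U); [assumption|apply HR; lra]. }
  exists c, d, c', d'. repeat split; try lra.
  apply (Rmult_eq_reg_r (h * h)); [|nra].
  rewrite Ed in Ec. rewrite Ec' in Ed'.
  replace (x + h - x) with h in * by ring. replace (y + h - y) with h in * by ring. lra.
Qed.

Lemma mixed_partials_eq U f f0 f1 f01 f10 p : open2 U -> U p ->
  has_partial U 0 f f0 -> has_partial U 1 f f1 ->
  has_partial U 1 f0 f01 -> has_partial U 0 f1 f10 ->
  cont_on U f01 -> cont_on U f10 -> f01 p = f10 p.
Proof.
  intros HU Hp H0 H1 H01 H10 C01 C10.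
  destruct p as [x y].
  destruct (open2_rect U (x, y) HU Hp) as [e [He HR]]; simpl in HR.
  apply cond_eq. intros eps Heps.
  destruct (C01 (x, y) Hp (eps / 2)) as [d1 [Hd1 B1]]; [lra|].
  destruct (C10 (x, y) Hp (eps / 2)) as [d2 [Hd2 B2]]; [lra|].
  set (h := Rmin e (Rmin d1 d2) / 2).
  assert (Hh : 0 < h /\ h < e /\ h < d1 /\ h < d2)
    by (unfold h, Rmin; repeat destruct Rle_dec; lra).
  destruct (mixed_difference_mvt U f f0 f1 f01 f10 x y h)
    as [c [d [c' [d' [Hc [Hd [Hc' [Hd' E]]]]]]]]; try assumption; [lra| |].
  { intros a b Ha Hb. apply HR; rewrite Rabs_right; lra. }
  specialize (B1 (c, d)). specialize (B2 (c', d')). simpl in B1, B2.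
  rewrite Rabs_right in B1, B2 by lra. rewrite Rabs_right in B1, B2 by lra.
  apply Rabs_def2 in B1; [|lra|lra]. apply Rabs_def2 in B2; [|lra|lra].
  apply Rabs_def1; lra.
Qed.

Lemma derivable_pt_lim_increment_fst V f f0 q (u v : R -> R) du dv :
  open2 V -> V q -> has_partial V 0 f f0 -> cont_on V f0 ->
  derivable_pt_lim u 0 du -> derivable_pt_lim v 0 dv -> u 0 = fst q -> v 0 = snd q ->
  derivable_pt_lim (fun t => f (u t, v t) - f (fst q, v t)) 0 (f0 q * du).
Proof.
  intros HV Hq H0 C0 Du Dv Eu Ev eps Heps.
  destruct q as [x0 y0]; simpl in Eu, Ev |- *.
  destruct (open2_rect V (x0, y0) HV Hq) as [eV [HeV HR]]; simpl in HR.
  destruct (close_mult (f0 (x0, y0)) du eps Heps) as [e [He Hclose]].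
  destruct (C0 (x0, y0) Hq e He) as [dc [Hdc Cc]]; simpl in Cc.
  set (r := Rmin eV dc).
  assert (Hr : 0 < r /\ r <= eV /\ r <= dc) by (unfold r, Rmin; destruct Rle_dec; lra).
  destruct (derivable_pt_lim_cont u 0 du Du r) as [da [Hda Ca]]; [lra|].
  destruct (derivable_pt_lim_cont v 0 dv Dv r) as [db [Hdb Cb]]; [lra|].
  destruct (Du e He) as [dd Hdd].
  set (del := Rmin da (Rmin db dd)).
  assert (Hdel : 0 < del /\ del <= da /\ del <= db /\ del <= dd)
    by (pose proof (cond_pos dd); unfold del, Rmin; repeat destruct Rle_dec; lra).
  exists (mkposreal del (proj1 Hdel)). simpl. intros h Hh Hhd.
  specialize (Hdd h Hh ltac:(lra)). specialize (Ca h ltac:(lra)). specialize (Cb h ltac:(lra)).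
  rewrite Rplus_0_l, Eu in *. rewrite Ev in Cb. rewrite Ev, Rminus_diag, Rminus_0_r.
  destruct (MVT_between (fun s => f (s, v h)) (fun s => f0 (s, v h)) x0 (u h))
    as [c [Hc E]].
  { intros c Hc. apply (has_partial_fst V); [exact H0|apply HR; lra]. }
  rewrite E. unfold Rdiv. rewrite Rmult_assoc.
  apply Hclose; [apply Cc; simpl; lra|exact Hdd].
Qed.

Lemma derivable_pt_lim_comp2 V f f0 f1 q (u v : R -> R) du dv :
  open2 V -> V q -> has_partial V 0 f f0 -> has_partial V 1 f f1 -> cont_on V f0 ->
  derivable_pt_lim u 0 du -> derivable_pt_lim v 0 dv -> u 0 = fst q -> v 0 = snd q ->
  derivable_pt_lim (fun t => f (u t, v t)) 0 (f0 q * du + f1 q * dv).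
Proof.
  intros HV Hq H0 H1 C0 Du Dv Eu Ev.
  assert (D2 : derivable_pt_lim (fun t => f (fst q, v t)) 0 (f1 q * dv)).
  { apply (derivable_pt_lim_comp v (fun s => f (fst q, s))); [exact Dv|].
    rewrite Ev. destruct q. apply (has_partial_snd V); assumption. }
  eapply derivable_pt_lim_ext;
    [|exact (derivable_pt_lim_plus _ _ 0 _ _
               (derivable_pt_lim_increment_fst V f f0 q u v du dv HV Hq H0 C0 Du Dv Eu Ev) D2)].
  intros t. unfold plus_fct. ring.
Qed.

Definition det2 (M : nat -> nat -> R) : R :=
  M 0%nat 0%nat * M 1%nat 1%nat - M 0%nat 1%nat * M 1%nat 0%nat.

(* The chain rule applied to [S (T p) = p] gives [DS(T x) * DT(x) = I]. *)
Lemma diffeo_jacobian_det U V T S dT x :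
  open2 U -> open2 V -> (forall p, U p -> V (T p)) -> smooth_map_on V S ->
  (forall p, U p -> S (T p) = p) ->
  (forall k i, (k < 2)%nat -> (i < 2)%nat -> has_partial U i (fun p => coord k (T p)) (dT k i)) ->
  U x -> det2 (fun a b => dT a b x) <> 0.
Proof.
  intros HU HV HTV [S1 S2] HST HdT Hx.
  destruct (S1 1%nat) as [_ [g0 [g1 [P0 [P1 [C0 _]]]]]].
  destruct (S2 1%nat) as [_ [h0 [h1 [Q0 [Q1 [D0 _]]]]]].
  destruct (open2_shift U x HU Hx) as [e [He Hsh]].
  assert (inverse_row : forall F f0 f1 i g l, (i < 2)%nat ->
    has_partial V 0 F f0 -> has_partial V 1 F f1 -> cont_on V f0 ->
    (forall t, Rabs t < e -> F (T (shift i x t)) = g t) -> derivable_pt_lim g 0 l ->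
    f0 (T x) * dT 0%nat i x + f1 (T x) * dT 1%nat i x = l).
  { intros F f0 f1 i g l Hi HF0 HF1 CF0 EF Dg.
    apply (uniqueness_limite g 0); [|exact Dg].
    apply (derivable_pt_lim_locally_ext (fun t => F (T (shift i x t))) g 0 (- e) e);
      [lra|intros t Ht; apply EF, Rabs_def1; lra|].
    eapply derivable_pt_lim_ext; [intros t; rewrite (surjective_pairing (T (shift i x t))); reflexivity|].
    apply (derivable_pt_lim_comp2 V F f0 f1); auto.
    - exact (HdT 0%nat i ltac:(lia) Hi x Hx).
    - exact (HdT 1%nat i ltac:(lia) Hi x Hx).
    - now rewrite shift0.
    - now rewrite shift0. }
  assert (HSTs : forall i t, Rabs t < e -> S (T (shift i x t)) = shift i x t)
    by (intros i t Ht; apply HST, Hsh, Ht).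
  assert (e00 : g0 (T x) * dT 0%nat 0%nat x + g1 (T x) * dT 1%nat 0%nat x = 1).
  { apply (inverse_row (fun q => fst (S q)) g0 g1 0%nat (fun t => fst x + t)); auto.
    - intros t Ht. now rewrite HSTs.
    - eapply derivable_pt_lim_val; [derive fail|ring]. }
  assert (e01 : g0 (T x) * dT 0%nat 1%nat x + g1 (T x) * dT 1%nat 1%nat x = 0).
  { apply (inverse_row (fun q => fst (S q)) g0 g1 1%nat (fun _ => fst x)); auto.
    - intros t Ht. now rewrite HSTs.
    - apply derivable_pt_lim_const. }
  assert (e10 : h0 (T x) * dT 0%nat 0%nat x + h1 (T x) * dT 1%nat 0%nat x = 0).
  { apply (inverse_row (fun q => snd (S q)) h0 h1 0%nat (fun _ => snd x)); auto.
    - intros t Ht. now rewrite HSTs.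
    - apply derivable_pt_lim_const. }
  assert (e11 : h0 (T x) * dT 0%nat 1%nat x + h1 (T x) * dT 1%nat 1%nat x = 1).
  { apply (inverse_row (fun q => snd (S q)) h0 h1 1%nat (fun t => snd x + t)); auto.
    - intros t Ht. now rewrite HSTs.
    - eapply derivable_pt_lim_val; [derive fail|ring]. }
  unfold det2. intros Hdet.
  assert (Hprod : (g0 (T x) * h1 (T x) - g1 (T x) * h0 (T x)) *
     (dT 0%nat 0%nat x * dT 1%nat 1%nat x - dT 0%nat 1%nat x * dT 1%nat 0%nat x) =
     (g0 (T x) * dT 0%nat 0%nat x + g1 (T x) * dT 1%nat 0%nat x) *
     (h0 (T x) * dT 0%nat 1%nat x + h1 (T x) * dT 1%nat 1%nat x) -
     (g0 (T x) * dT 0%nat 1%nat x + g1 (T x) * dT 1%nat 1%nat x) *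
     (h0 (T x) * dT 0%nat 0%nat x + h1 (T x) * dT 1%nat 0%nat x)) by ring.
  rewrite e00, e01, e10, e11, Hdet, Rmult_0_r in Hprod. lra.
Qed.

Lemma det2_kernel m00 m01 m10 m11 x y : m00 * m11 - m01 * m10 <> 0 ->
  m00 * x + m01 * y = 0 -> m10 * x + m11 * y = 0 -> x = 0 /\ y = 0.
Proof.
  intros Hdet E0 E1. split.
  - assert (Hx : x * (m00 * m11 - m01 * m10) = 0).
    { transitivity (m11 * (m00 * x + m01 * y) - m01 * (m10 * x + m11 * y)); [ring|].
      rewrite E0, E1; ring. }
    destruct (Rmult_integral _ _ Hx); [assumption|contradiction].
  - assert (Hy : y * (m00 * m11 - m01 * m10) = 0).
    { transitivity (m00 * (m10 * x + m11 * y) - m10 * (m00 * x + m01 * y)); [ring|].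
      rewrite E0, E1; ring. }
    destruct (Rmult_integral _ _ Hy); [assumption|contradiction].
Qed.

(* Transposing alternately the first and the last pair of indices changes the
   sign three times and returns to [E i j k]. *)
Lemma sym_antisym_eq0 n (E : nat -> nat -> nat -> R) :
  (forall i j k, (i < n)%nat -> (j < n)%nat -> (k < n)%nat -> E i j k = E j i k) ->
  (forall i j k, (i < n)%nat -> (j < n)%nat -> (k < n)%nat -> E i j k + E i k j = 0) ->
  forall i j k, (i < n)%nat -> (j < n)%nat -> (k < n)%nat -> E i j k = 0.
Proof.
  intros Hsym Hanti i j k Hi Hj Hk.
  pose proof (Hanti i j k Hi Hj Hk). pose proof (Hsym i k j Hi Hk Hj).
  pose proof (Hanti k i j Hk Hi Hj). pose proof (Hsym k j i Hk Hj Hi).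
  pose proof (Hanti j k i Hj Hk Hi). pose proof (Hsym j i k Hj Hi Hk).
  lra.
Qed.

Section Pullback.

Variables G Gt : TypeA.

(* [pullback_eq G Gt J H i j k] reads [H k j i = defect J i j k]: the linear
   map with matrix [J] pulls [Gt] back to [G] iff [defect J] vanishes. *)
Definition defect (J : nat -> nat -> R) (i j k : nat) : R :=
  sum2 (fun l => Gam G i j l * J k l)
  - sum2 (fun b => sum2 (fun a => Gam Gt b a k * J b i * J a j)).

Definition defect_deriv (J J' : nat -> nat -> R) (i j k : nat) : R :=
  sum2 (fun l => Gam G i j l * J' k l)
  - sum2 (fun b => sum2 (fun a => Gam Gt b a k * (J' b i * J a j + J b i * J' a j))).

(* When the Jacobian of a map solves [d_i J^k_j = defect J i j k], this is
   [d_1 d_0 J^k_j - d_0 d_1 J^k_j]. *)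
Definition integrability (J : nat -> nat -> R) (j k : nat) : R :=
  defect_deriv J (fun a b => defect J 1 b a) 0 j k
  - defect_deriv J (fun a b => defect J 0 b a) 1 j k.

Definition ric_pullback (J : nat -> nat -> R) (i j : nat) : R :=
  sum2 (fun b => sum2 (fun a => ric Gt b a * J b i * J a j)).

Definition ric_pullback_deriv (J J' : nat -> nat -> R) (j k : nat) : R :=
  sum2 (fun b => sum2 (fun a => ric Gt b a * (J' b j * J a k + J b j * J' a k))).

Definition ric_defect (J : nat -> nat -> R) (i j k : nat) : R :=
  sum2 (fun a => sum2 (fun b => ric Gt b a * defect J i j b) * J a k).

Lemma derivable_defect (Jt : R -> nat -> nat -> R) J' i j k :
  (i < 2)%nat -> (j < 2)%nat -> (k < 2)%nat ->
  (forall a b, (a < 2)%nat -> (b < 2)%nat -> derivable_pt_lim (fun t => Jt t a b) 0 (J' a b)) ->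
  derivable_pt_lim (fun t => defect (Jt t) i j k) 0 (defect_deriv (Jt 0) J' i j k).
Proof.
  intros Hi Hj Hk DJ.
  destruct (lt2 i Hi) as [->| ->]; destruct (lt2 j Hj) as [->| ->];
    destruct (lt2 k Hk) as [->| ->]; unfold defect, defect_deriv, sum2, Gam; simpl;
    (eapply derivable_pt_lim_val; [derive ltac:(apply DJ; lia)|cbv beta; ring]).
Qed.

Lemma derivable_ric_pullback (Jt : R -> nat -> nat -> R) J' j k :
  (j < 2)%nat -> (k < 2)%nat ->
  (forall a b, (a < 2)%nat -> (b < 2)%nat -> derivable_pt_lim (fun t => Jt t a b) 0 (J' a b)) ->
  derivable_pt_lim (fun t => ric_pullback (Jt t) j k) 0 (ric_pullback_deriv (Jt 0) J' j k).
Proof.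
  intros Hj Hk DJ.
  destruct (lt2 j Hj) as [->| ->]; destruct (lt2 k Hk) as [->| ->];
    unfold ric_pullback, ric_pullback_deriv, sum2; simpl;
    (eapply derivable_pt_lim_val; [derive ltac:(apply DJ; lia)|cbv beta; ring]).
Qed.

(* Contracting the integrability condition, i.e. the curvature identity
   [T^* R~ = R], gives the Ricci identity [T^* rho~ = rho]. *)
Lemma integrability_ric J i j : (i < 2)%nat ->
  det2 J * (ric G i j - ric_pullback J i j)
  = J 0%nat i * integrability J j 1 - J 1%nat i * integrability J j 0.
Proof.
  intros Hi. destruct (lt2 i Hi) as [->| ->]; destruct j as [|[|j]];
    unfold integrability, defect_deriv, defect, det2, ric_pullback, ric, Rc, sum2, Gam;
    simpl; ring.
Qed.

Lemma ric_pullback_eq J : det2 J <> 0 ->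
  (forall j k, (j < 2)%nat -> (k < 2)%nat -> integrability J j k = 0) ->
  forall i j, (i < 2)%nat -> (j < 2)%nat -> ric_pullback J i j = ric G i j.
Proof.
  intros Hdet HJ i j Hi Hj.
  assert (E := integrability_ric J i j Hi).
  rewrite (HJ j 0%nat Hj ltac:(lia)), (HJ j 1%nat Hj ltac:(lia)) in E.
  rewrite !Rmult_0_r, Rminus_0_r in E.
  destruct (Rmult_integral _ _ E); [contradiction|lra].
Qed.

(* Here the symmetry of the Ricci tensor of a Type A connection is used. *)
Lemma ric_pullback_deriv_defect J i j k :
  ric_pullback_deriv J (fun a b => defect J i b a) j k = ric_defect J i j k + ric_defect J i k j.
Proof. unfold ric_pullback_deriv, ric_defect, defect, ric, Rc, sum2, Gam; simpl; ring. Qed.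

Lemma ric_defect_comm J i j k : ric_defect J i j k = ric_defect J j i k.
Proof.
  destruct i as [|[|i]]; destruct j as [|[|j]]; unfold ric_defect, defect, sum2, Gam; simpl; ring.
Qed.

Lemma defect_eq0 J : det2 J <> 0 -> ric_nondegenerate Gt ->
  (forall i j k, (i < 2)%nat -> (j < 2)%nat -> (k < 2)%nat ->
     ric_pullback_deriv J (fun a b => defect J i b a) j k = 0) ->
  forall i j k, (i < 2)%nat -> (j < 2)%nat -> (k < 2)%nat -> defect J i j k = 0.
Proof.
  intros Hdet Hric HJ i j k Hi Hj Hk.
  assert (E0 : forall i j k, (i < 2)%nat -> (j < 2)%nat -> (k < 2)%nat -> ric_defect J i j k = 0).
  { apply sym_antisym_eq0; [intros; apply ric_defect_comm|].
    intros i' j' k' Hi' Hj' Hk'. rewrite <- ric_pullback_deriv_defect. auto. }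
  destruct (det2_kernel (J 0%nat 0%nat) (J 1%nat 0%nat) (J 0%nat 1%nat) (J 1%nat 1%nat)
              (sum2 (fun b => ric Gt b 0 * defect J i j b))
              (sum2 (fun b => ric Gt b 1 * defect J i j b))) as [U0 U1].
  - unfold det2 in Hdet. lra.
  - rewrite <- (E0 i j 0%nat Hi Hj ltac:(lia)). unfold ric_defect, sum2. ring.
  - rewrite <- (E0 i j 1%nat Hi Hj ltac:(lia)). unfold ric_defect, sum2. ring.
  - destruct (det2_kernel (ric Gt 0 0) (ric Gt 1 0) (ric Gt 0 1) (ric Gt 1 1)
                (defect J i j 0) (defect J i j 1)) as [F0 F1].
    + unfold ric_nondegenerate in Hric. lra.
    + rewrite <- U0. unfold sum2. ring.
    + rewrite <- U1. unfold sum2. ring.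
    + destruct (lt2 k Hk) as [->| ->]; assumption.
Qed.

Section JacobianSystem.

Variable U : pt -> Prop.
Variable J : pt -> nat -> nat -> R.
Hypothesis U_open : open2 U.
Hypothesis J_cont : forall a b, (a < 2)%nat -> (b < 2)%nat -> cont_on U (fun x => J x a b).
Hypothesis J_partial : forall i a b, (i < 2)%nat -> (a < 2)%nat -> (b < 2)%nat ->
  has_partial U i (fun x => J x a b) (fun x => defect (J x) i b a).
Hypothesis J_det : forall x, U x -> det2 (J x) <> 0.

Lemma has_partial_defect i i' j k : (i < 2)%nat -> (i' < 2)%nat -> (j < 2)%nat -> (k < 2)%nat ->
  has_partial U i (fun x => defect (J x) i' j k)
    (fun x => defect_deriv (J x) (fun a b => defect (J x) i b a) i' j k).
Proof.
  intros Hi Hi' Hj Hk x Hx.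
  pose proof (derivable_defect (fun t => J (shift i x t)) (fun a b => defect (J x) i b a) i' j k
                Hi' Hj Hk (fun a b Ha Hb => J_partial i a b Hi Ha Hb x Hx)) as D.
  cbv beta in D. now rewrite shift0 in D.
Qed.

Lemma jacobian_integrable x j k : U x -> (j < 2)%nat -> (k < 2)%nat ->
  integrability (J x) j k = 0.
Proof.
  intros Hx Hj Hk. apply Rminus_diag_eq.
  apply (mixed_partials_eq U (fun x => J x k j) (fun x => defect (J x) 0 j k)
           (fun x => defect (J x) 1 j k)
           (fun x => defect_deriv (J x) (fun a b => defect (J x) 1 b a) 0 j k)
           (fun x => defect_deriv (J x) (fun a b => defect (J x) 0 b a) 1 j k) x);
    try apply has_partial_defect; auto; try lia;
    destruct (lt2 j Hj) as [->| ->]; destruct (lt2 k Hk) as [->| ->];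
    unfold defect_deriv, defect, sum2, Gam; simpl; cont ltac:(apply J_cont; lia).
Qed.

Lemma jacobian_ric_pullback x i j : U x -> (i < 2)%nat -> (j < 2)%nat ->
  ric_pullback (J x) i j = ric G i j.
Proof.
  intros Hx. apply ric_pullback_eq; [now apply J_det|].
  intros; now apply jacobian_integrable.
Qed.

Lemma jacobian_defect_eq0 : ric_nondegenerate Gt -> forall x, U x ->
  forall i j k, (i < 2)%nat -> (j < 2)%nat -> (k < 2)%nat -> defect (J x) i j k = 0.
Proof.
  intros Hric x Hx. apply defect_eq0; [now apply J_det|exact Hric|].
  intros i j k Hi Hj Hk.
  destruct (open2_shift U x U_open Hx) as [e [He Hsh]].
  apply (derivable_pt_lim_locally_const (fun t => ric_pullback (J (shift i x t)) j k)
           (ric G j k) _ e He).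
  - intros t Ht. apply jacobian_ric_pullback; auto.
  - pose proof (derivable_ric_pullback (fun t => J (shift i x t)) (fun a b => defect (J x) i b a)
                  j k Hj Hk (fun a b Ha Hb => J_partial i a b Hi Ha Hb x Hx)) as D.
    cbv beta in D. now rewrite shift0 in D.
Qed.

End JacobianSystem.

End Pullback.

Lemma linearly_equivalent_of_affinely G Gt : ric_nondegenerate Gt ->
  affinely_equivalent G Gt -> linearly_equivalent G Gt.
Proof.
  intros Hric [U [V [T [[p Hp] [[HU [HV [HTV [[T0 T1] [S [_ [HST [_ HS]]]]]]]]
                                 [dT [ddT [HdT [HddT Hpb]]]]]]]]].
  set (J := fun x a b => dT a b x).
  assert (Hdet : forall x, U x -> det2 (J x) <> 0)
    by (intros x Hx; exact (diffeo_jacobian_det U V T S dT x HU HV HTV HS HST HdT Hx)).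
  assert (Hcont : forall a b, (a < 2)%nat -> (b < 2)%nat -> cont_on U (fun x => J x a b)).
  { intros a b Ha Hb. destruct (lt2 a Ha) as [->| ->].
    - exact (smooth_on_partial_cont U _ _ b HU T0 (HdT 0%nat b Ha Hb) Hb).
    - exact (smooth_on_partial_cont U _ _ b HU T1 (HdT 1%nat b Ha Hb) Hb). }
  assert (Hpart : forall i a b, (i < 2)%nat -> (a < 2)%nat -> (b < 2)%nat ->
            has_partial U i (fun x => J x a b) (fun x => defect G Gt (J x) i b a)).
  { intros i a b Hi Ha Hb x Hx.
    replace (defect G Gt (J x) i b a) with (ddT a b i x)
      by (pose proof (Hpb x Hx i b a Hi Hb Ha); unfold pullback_eq in *; unfold defect, J; lra).
    exact (HddT a b i Ha Hb Hi x Hx). }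
  exists (J p). split; [exact (Hdet p Hp)|].
  intros i j k Hi Hj Hk.
  pose proof (jacobian_defect_eq0 G Gt U J HU Hcont Hpart Hdet Hric p Hp i j k Hi Hj Hk) as D.
  unfold pullback_eq. unfold defect in D. lra.
Qed.

Lemma affinely_equivalent_of_linearly G Gt :
  linearly_equivalent G Gt -> affinely_equivalent G Gt.
Proof.
  intros [M [Hdet Hpb]]. change (det2 M <> 0) in Hdet. set (d := det2 M) in *.
  assert (Hopen : open2 (fun _ => True)) by (intros p _; exists 1; split; [lra|auto]).
  exists (fun _ => True), (fun _ => True),
    (fun p => (M 0%nat 0%nat * fst p + M 0%nat 1%nat * snd p,
               M 1%nat 0%nat * fst p + M 1%nat 1%nat * snd p)).
  split; [exists (0, 0); exact I|]. split.
  - do 3 (split; [auto|]). split; [split; apply smooth_on_linear|].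
    exists (fun q => (M 1%nat 1%nat / d * fst q + - M 0%nat 1%nat / d * snd q,
                      - M 1%nat 0%nat / d * fst q + M 0%nat 0%nat / d * snd q)).
    split; [auto|]. split; [|split; [|split; apply smooth_on_linear]];
      intros [x y] _; simpl; f_equal; unfold d, det2 in *; field; exact Hdet.
  - exists (fun k i _ => M k i), (fun _ _ _ _ => 0). split; [|split].
    + intros k i Hk Hi p _.
      destruct (lt2 k Hk) as [->| ->]; destruct (lt2 i Hi) as [->| ->]; simpl;
        (eapply derivable_pt_lim_val; [derive fail|cbv beta; ring]).
    + intros k i j _ _ _ p _. apply derivable_pt_lim_const.
    + intros p _. exact Hpb.
Qed.

Theorem theorem3p8 (G Gt : TypeA) :
  ric_nondegenerate G -> ric_nondegenerate Gt ->
  (linearly_equivalent G Gt <-> affinely_equivalent G Gt).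
Proof.
  intros _ HGt. split.
  - apply affinely_equivalent_of_linearly.
  - now apply linearly_equivalent_of_affinely.
Qed.
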